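(* Let $(\Omega,\mathcal A)$ be a measurable space and let $K\subset\mathbb C^n$ be a compact set. Then $R_\Omega^{unif}(K)=R_\Omega(K)$.
   Context: A random function $f:\Omega\times X\to\mathbb C$ (with $X$ any set) is a function such that $f(\cdot,x)$ is measurable (with respect to $\mathcal A$ and the Borel sets of $\mathbb C$) for every $x\in X$. A random rational function with no poles on $K$ is a function $r(\omega,z)$ such that for each $\omega$, $r(\omega,\cdot)$ is a rational function on $\mathbb C^n$ with no poles on $K$, and $r(\cdot,z)$ is measurable for each $z$. Consider random functions $f:\Omega\times K\to\mathbb C$ such that $f(\omega,\cdot)$ is continuous on $K$ and holomorphic on the interior of $K$ for every $\omega$. Such an $f$ belongs to $R_\Omega(K)$ if there is a sequence $r_j$ of random rational functions with no poles on $K$ such that for every $\omega\in\Omega$, $r_j(\omega,\cdot)\to f(\omega,\cdot)$ uniformly on $K$. Such an $f$ belongs to $R_\Omega^{unif}(K)$ if for every $\varepsilon>0$ there is a random rational function $r$ with no poles on $K$ such that $|r(\omega,z)-f(\omega,z)|<\varepsilon$ for all $(\omega,z)\in\Omega\times K$. *)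

From HB Require Import structures.
From mathcomp Require Import all_boot all_order all_algebra.
From mathcomp Require Import all_classical all_reals all_analysis.
From mathcomp Require Import complex.
From mathcomp Require mpoly.
Set Implicit Arguments. Unset Strict Implicit. Unset Printing Implicit Defensive.
Import Order.TTheory GRing.Theory Num.Theory.
Import numFieldNormedType.Exports.
Local Open Scope classical_set_scope.
Local Open Scope ring_scope.

(* C is a numClosedFieldType, hence a normed field, and C^n is modelled as the
   normed C-vector space of row vectors 'rV[C]_n. *)
Definition Cx (R : realType) : numClosedFieldType := complex R.

Definition borel_measurableC (R : realType) (d : measure_display)
    (T : measurableType d) (f : T -> Cx R) : Prop :=
  forall B : set (Cx R), <<s @open (Cx R) >> B -> measurable (f @^-1` B).

Definition random_fun (R : realType) (d : measure_display)
    (T : measurableType d) (X : Type) (A : set X) (f : T -> X -> Cx R) : Prop :=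
  forall x, A x -> borel_measurableC (fun w => f w x).

Definition peval (R : realType) (n : nat) (p : mpoly.mpoly n (Cx R))
    (z : 'rV[Cx R]_n) : Cx R :=
  mpoly.meval (fun i => z ord0 i) p.

Definition rational_no_poles_on (R : realType) (n : nat)
    (K : set 'rV[Cx R]_n) (g : 'rV[Cx R]_n -> Cx R) : Prop :=
  exists p q : mpoly.mpoly n (Cx R),
    forall z, K z -> peval q z != 0 /\ g z = peval p z / peval q z.

Definition random_rational (R : realType) (d : measure_display)
    (T : measurableType d) (n : nat) (K : set 'rV[Cx R]_n)
    (r : T -> 'rV[Cx R]_n -> Cx R) : Prop :=
  (forall w, rational_no_poles_on K (r w)) /\ random_fun K r.

Definition admissible (R : realType) (d : measure_display)
    (T : measurableType d) (n : nat) (K : set 'rV[Cx R]_n)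
    (f : T -> 'rV[Cx R]_n -> Cx R) : Prop :=
  random_fun K f /\
  (forall w, {within K, continuous (f w)}) /\
  (forall w z, (K°) z -> differentiable (f w) z).

Definition R_Omega (R : realType) (d : measure_display)
    (T : measurableType d) (n : nat) (K : set 'rV[Cx R]_n)
    (f : T -> 'rV[Cx R]_n -> Cx R) : Prop :=
  admissible K f /\
  exists r : nat -> T -> 'rV[Cx R]_n -> Cx R,
    (forall j, random_rational K (r j)) /\
    forall w (e : Cx R), 0 < e -> exists N : nat, forall j, (N <= j)%N ->
      forall z, K z -> `|r j w z - f w z| < e.

Definition R_Omega_unif (R : realType) (d : measure_display)
    (T : measurableType d) (n : nat) (K : set 'rV[Cx R]_n)
    (f : T -> 'rV[Cx R]_n -> Cx R) : Prop :=
  admissible K f /\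
  forall e : Cx R, 0 < e -> exists r : T -> 'rV[Cx R]_n -> Cx R,
    random_rational K r /\ forall w z, K z -> `|r w z - f w z| < e.

(* The inclusion of R_Omega(K) in its uniform version is a measurable selection.
   Fix e > 0 and a sequence D dense in K (it exists because K is compact).  For
   each w pick the first index j such that |r_j(w) - f(w)| < e/2 at every point
   of D: one exists by the uniform convergence of r_j(w) to f(w), and the event
   "j is picked" is measurable since only countably many points are tested.
   Continuity of r_j(w) - f(w) on K turns the bound on D into the bound e on
   all of K, so w |-> r_(j(w))(w) is a random rational function e-close to f
   uniformly on Omega x K. *)

From HB Require Import structures.
From mathcomp Require Import all_boot all_order all_algebra.
From mathcomp Require Import all_classical all_reals all_analysis.
From mathcomp Require Import complex.
From mathcomp Require mpoly.
From mathcomp Require Import lra.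
Import numFieldNormedType.Exports.
Import Order.TTheory GRing.Theory Num.Theory.
Local Open Scope classical_set_scope.
Local Open Scope ring_scope.
Local Open Scope complex_scope.

Lemma natSinv_lt {R : realType} {e : Cx R} :
  0 < e -> exists m : nat, m.+1%:R^-1 < e.
Proof.
case: e => a b; rewrite ltcE /= => /andP[/eqP -> a0].
exists (Num.truncn a^-1).
rewrite -(rmorph_nat (real_complex R)) -fmorphV.
rewrite -[X in _ < X]/(a%:C) ltcR -[X in _ < X]invrK ltf_pV2 ?posrE ?invr_gt0 //.
exact: truncnS_gt.
Qed.

Definition ratc (R : realType) (k : nat) : Cx R :=
  if @unpickle (rat * rat)%type k is Some q then ratr q.1 +i* ratr q.2 else 0.

Lemma ratc_dense {R : realType} (z : Cx R) {e : Cx R} :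
  0 < e -> exists k, `|z - ratc R k| < e.
Proof.
case: e => c c'; rewrite ltcE /= => /andP[/eqP -> c0]; case: z => x y.
have [a] := @rat_in_itvoo R (x - c / 2) (x + c / 2) ltac:(lra).
have [b] := @rat_in_itvoo R (y - c / 2) (y + c / 2) ltac:(lra).
rewrite !in_itv /= => /andP[b1 b2] /andP[a1 a2].
exists (pickle (a, b)); rewrite /ratc pickleK normc_def /=.
rewrite -[X in _ < X]/(c%:C) ltcR -(ger0_norm (ltW c0)) -sqrtr_sqr.
rewrite ltr_sqrt ?exprn_gt0 //; nra.
Qed.

Section measurability.
Context {R : realType} {d : measure_display} {T : measurableType d}.
Local Notation C := (Cx R).

Lemma borel_ball (q r : C) : <<s @open C >> (ball q r).
Proof. by apply: sub_sigma_algebra; exact: ball_open. Qed.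

Lemma measurable_normB_lt (g h : T -> C) (c : C) :
  borel_measurableC g -> borel_measurableC h ->
  measurable [set w | `|g w - h w| < c].
Proof.
move=> mg mh.
pose dl (m : nat) : C := m.+1%:R^-1.
(* |g w - h w| < c iff, for some m, some rational point is dl m-close to g w
   and (c - dl m)-close to h w *)
suff -> : [set w | `|g w - h w| < c] = \bigcup_m \bigcup_k
    (g @^-1` ball (ratc R k) (dl m) `&` h @^-1` ball (ratc R k) (c - dl m)).
  apply: bigcupT_measurable => m; apply: bigcupT_measurable => k.
  by apply: measurableI; [exact: mg (borel_ball _ _)|exact: mh (borel_ball _ _)].
rewrite -ball_normE; apply/seteqP; split => w /=.
- move=> ghc; have [m Hm] : exists m, dl m < (c - `|g w - h w|) / 2.
    by apply: natSinv_lt; rewrite divr_gt0 // subr_gt0.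
  have dm0 : 0 < dl m by rewrite invr_gt0 ltr0Sn.
  have [k Hk] := ratc_dense (g w) dm0.
  exists m => //; exists k => //; split => /=; first by rewrite distrC.
  apply: le_lt_trans (ler_distD (g w) _ _) _; rewrite distrC ltrBrDr.
  rewrite ltr_pdivlMr // mulr_natr mulr2n ltrBrDr in Hm.
  by apply: lt_trans Hm; rewrite addrAC ltrD2r ltrD2r.
- move=> [m _ [k _ [/= H1 H2]]].
  apply: le_lt_trans (ler_distD (ratc R k) _ _) _.
  by rewrite -[c](subrK (dl m)) [ltRHS]addrC ltrD // distrC.
Qed.

Lemma measurable_first_index (A : nat -> set T) :
  (forall j, measurable (A j)) -> (forall w, exists j, A j w) ->
  exists N : T -> nat,
    (forall w, A (N w) w) /\ forall j, measurable (N @^-1` [set j]).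
Proof.
move=> mA covA.
have /choice[N NP] : forall w, exists j, A j w /\ forall i, (i < j)%N -> ~ A i w.
  move=> w; have [j Aj] := covA w.
  have /ex_minnP[k /asboolP Ak kmin] : exists j, `[< A j w >].
    by exists j; exact/asboolP.
  by exists k; split => // i ik /asboolP/kmin; rewrite leqNgt ik.
exists N; split => [w|j]; first exact: (NP w).1.
have -> : N @^-1` [set j] = A j `&` \bigcap_(i in [set i | (i < j)%N]) ~` A i.
  apply/seteqP; split => w /=.
  - by move=> <-; split; [exact: (NP w).1 | move=> i /= /(NP w).2].
  - move=> [Aj notA]; apply/eqP; rewrite eqn_leq; apply/andP; split.
    + by rewrite leqNgt; apply/negP => /(NP w).2; apply.
    + by rewrite leqNgt; apply/negP => /notA; apply; exact: (NP w).1.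
apply: measurableI => //.
by apply: bigcap_measurableType => i _; exact: measurableC.
Qed.

Lemma borel_measurableC_select (N : T -> nat) (g : nat -> T -> C) :
  (forall j, measurable (N @^-1` [set j])) ->
  (forall j, borel_measurableC (g j)) -> borel_measurableC (fun w => g (N w) w).
Proof.
move=> mN mg B borelB.
have -> : (fun w => g (N w) w) @^-1` B =
    \bigcup_j (N @^-1` [set j] `&` g j @^-1` B).
  by apply/seteqP; split => [w Bw|w [j _ [/= <-]]] //; exists (N w).
by apply: bigcupT_measurable => j; apply: measurableI; [exact: mN | exact: mg].
Qed.

End measurability.

Lemma continuous_exprn {K : numFieldType} {T : topologicalType}
    (f : T -> K) (k : nat) :
  continuous f -> continuous (fun z => f z ^+ k).
Proof.
move=> cf; elim: k => [|k IH].
  by under eq_fun do rewrite expr0; exact: cst_continuous.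
by under eq_fun do rewrite exprS; move=> z; exact: (cvgM (cf z) (IH z)).
Qed.

Section dense_sequences.
Context {R : realType} {V : pseudoMetricNormedZmodType (Cx R)}.
Local Notation C := (Cx R).

Definition dense_seq_in (K : set V) (D : nat -> V) : Prop :=
  forall z, K z -> forall e : C, 0 < e -> exists k, K (D k) /\ ball z e (D k).

Lemma compact_dense_seq (K : set V) : compact K -> exists D, dense_seq_in K D.
Proof.
rewrite compact_cover => cK.
have net m : exists s : seq V,
    forall z, K z -> exists2 x, x \in s & K x /\ ball x (m.+1%:R^-1 : C) z.
  have Kcover : K `<=` cover K (fun x => ball x (m.+1%:R^-1 : C)).
    by move=> z Kz; exists z => //; apply: ballxx; rewrite invr_gt0 ltr0Sn.
  have [F FK cover] := cK _ K _ (fun x _ => ball_open x _) Kcover.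
  exists (finmap.enum_fset F) => z /cover[x /= Fx xz].
  by exists x => //; split => //; have := FK _ Fx; rewrite in_setE.
have /choice[S HS] := net.
exists (fun k => if @unpickle (nat * nat)%type k is Some (m, i) then nth 0 (S m) i
                 else 0).
move=> z Kz e e0; have [m me] := natSinv_lt e0.
have [x xS [Kx xz]] := HS m z Kz.
exists (pickle (m, index x (S m))); rewrite pickleK nth_index //; split => //.
exact: le_ball (ltW me) _ (ball_sym xz).
Qed.

Lemma dense_seq_norm_lt (K : set V) (D : nat -> V) (h : V -> C) (c e : C) :
  dense_seq_in K D -> {within K, continuous h} -> c < e ->
  (forall k, K (D k) -> `|h (D k)| < c) -> forall z, K z -> `|h z| < e.
Proof.
move=> DK hc ce hD z Kz.
have /cvgrPdist_lt/(_ (e - c)) := (subspace_continuousP _ _).1 hc z Kz.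
rewrite subr_gt0 => /(_ ce)/nbhs_ballP[dl dl0 near_z].
have [k [Kk zk]] := DK z Kz dl dl0.
rewrite -(subrK (h (D k)) (h z)) -[e](subrK c).
apply: le_lt_trans (ler_normD _ _) _; rewrite ltrD ?hD //.
exact: near_z.
Qed.

End dense_sequences.

Section rational_functions.
Context {R : realType} {n : nat}.
Local Notation C := (Cx R).

Lemma peval_continuous (p : mpoly.mpoly n C) : continuous (peval p).
Proof.
rewrite /peval; under eq_fun do rewrite mpoly.mevalE.
apply: (continuous_big add_continuous) => m _ z.
apply: continuousM; first exact: cst_continuous.
apply: (continuous_big mul_continuous) => i _.
by apply: continuous_exprn; exact: coord_continuous.
Qed.

Lemma rational_no_poles_continuous (K : set 'rV[C]_n) (g : 'rV[C]_n -> C) :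
  rational_no_poles_on K g -> {within K, continuous g}.
Proof.
move=> [p [q pq]].
apply: (@subspace_eq_continuous _ K _ (fun z => peval p z / peval q z)).
  by move=> z /set_mem/pq[_ /esym].
apply: continuous_in_subspaceT => z /set_mem/pq[qz _].
apply: continuousM; first exact: peval_continuous.
exact: (cvgV qz (peval_continuous q z)).
Qed.

End rational_functions.

Section random_rational_approximation.
Variables (R : realType) (d : measure_display) (T : measurableType d) (n : nat).
Local Notation C := (Cx R).
Implicit Types (K : set 'rV[C]_n) (f : T -> 'rV[C]_n -> C).

Lemma R_Omega_unif_R_Omega K f : R_Omega_unif K f -> R_Omega K f.
Proof.
move=> [adm approx]; split => //.
have /choice[r rP] : forall j : nat, exists r, random_rational K r /\
    forall w z, K z -> `|r w z - f w z| < j.+1%:R^-1.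
  by move=> j; apply: approx; rewrite invr_gt0 ltr0Sn.
exists r; split => [j|w e e0]; first exact: (rP j).1.
have [N Ne] := natSinv_lt e0; exists N => j Nj z Kz.
apply: lt_trans ((rP j).2 w z Kz) _; apply: le_lt_trans Ne.
by rewrite lef_pV2 ?posrE ?ltr0Sn // ler_nat ltnS.
Qed.

Lemma R_Omega_R_Omega_unif K f : compact K -> R_Omega K f -> R_Omega_unif K f.
Proof.
move=> cK [adm [r [rr conv]]]; split => // e e0.
have [D DK] := compact_dense_seq K cK.
pose c := e / 2%:R.
have c0 : 0 < c by rewrite divr_gt0.
have ce : c < e by rewrite ltr_pdivrMr // ltr_pMr // ltr1n.
pose A j := \bigcap_(k in [set k | K (D k)])
  [set w | `|r j w (D k) - f w (D k)| < c].
have mA j : measurable (A j).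
  apply: bigcap_measurableType => k Kk.
  by apply: measurable_normB_lt; [exact: (rr j).2 | exact: adm.1].
have covA w : exists j, A j w.
  by have [N HN] := conv w c c0; exists N => k Kk; exact: HN.
have [N [NA mN]] := measurable_first_index A mA covA.
exists (fun w => r (N w) w); split; first split.
- by move=> w; exact: (rr (N w)).1.
- move=> z Kz; apply: (borel_measurableC_select N (fun j w => r j w z)) => // j.
  exact: (rr j).2.
- move=> w.
  apply: (@dense_seq_norm_lt _ _ K D (r (N w) w - f w) c e DK _ ce (NA w)).
  apply: within_continuousB; last exact: adm.2.1.
  exact: rational_no_poles_continuous ((rr (N w)).1 w).
Qed.

End random_rational_approximation.

Theorem theorem3p1 (R : realType) (d : measure_display) (T : measurableType d)
    (n : nat) (K : set 'rV[Cx R]_n) :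
  compact K ->
  forall f : T -> 'rV[Cx R]_n -> Cx R, R_Omega_unif K f <-> R_Omega K f.
Proof.
move=> cK f; split; [exact: R_Omega_unif_R_Omega | exact: R_Omega_R_Omega_unif].
Qed.
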